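(* Let $A\subseteq\mathfrak{S}_n$ be Schur-positive and $\mathrm{cDes}$-invariant, and let $(m_\lambda)_{\lambda\vdash n}$ be nonnegative integers such that $\sum_{\pi\in A}\mathbf{x}^{\mathrm{Des}(\pi)}=\sum_{\lambda\vdash n}m_\lambda\sum_{T\in\mathrm{SYT}(\lambda)}\mathbf{x}^{\mathrm{Des}(T)}$. Then for every $0\le k<n$, $m_{(n-k,1^k)}=|\{a\in A:\mathrm{Des}(a)=[k]\}|$, where $[0]:=\emptyset$.
   Context: For $\pi\in\mathfrak{S}_n$ (one-line notation), $\mathrm{Des}(\pi)=\{i\in[n-1]:\pi(i)>\pi(i+1)\}$ and $\mathrm{cDes}(\pi)=\{i\in[n]:\pi(i)>\pi(i+1)\}$ with $\pi(n+1):=\pi(1)$. $\mathbf{x}^J=\prod_{i\in J}x_i$; $i+J=\{i+j\bmod n:j\in J\}\subseteq[n]$. $A$ is Schur-positive if $\sum_{\pi\in A}\mathcal{F}_{n,\mathrm{Des}(\pi)}$ is symmetric and Schur-nonnegative, where $\mathcal{F}_{n,D}=\sum x_{i_1}\cdots x_{i_n}$ over $i_1\le\cdots\le i_n$ with $i_j<i_{j+1}$ for $j\in D$ (for such $A$, nonnegative integers $m_\lambda$ as in the claim exist). $A$ is $\mathrm{cDes}$-invariant if there is a bijection $\psi:A\to A$ with $\mathrm{cDes}(\psi\pi)=1+\mathrm{cDes}(\pi)$. For $T\in\mathrm{SYT}(\lambda)$, $\mathrm{Des}(T)$ is the set of $i\in[n-1]$ with $i+1$ in a strictly lower row than $i$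 (English notation); $(n-k,1^k)$ denotes the hook partition. *)

From HB Require Import structures.
From mathcomp Require Import all_boot all_order all_algebra all_fingroup.
From mathcomp Require Import mpoly.
Set Implicit Arguments. Unset Strict Implicit. Unset Printing Implicit Defensive.
Import GRing.Theory.
Local Open Scope ring_scope.

(* CONVENTION: [n] = {1,...,n} is represented by 'I_n via i <-> i+1.
   So a subset J of [n] is a {set 'I_n}; [k] = {1..k} is [set i : 'I_n | i < k];
   the successor i+1 mod n (with values in [n]) is ordS i. *)

Definition Des n (p : 'S_n) : {set 'I_n} :=
  [set i : 'I_n | (i.+1 < n)%N && (p (ordS i) < p i)%N].

Definition cDes n (p : 'S_n) : {set 'I_n} :=
  [set i : 'I_n | (p (ordS i) < p i)%N].

Definition shift1 n (J : {set 'I_n}) : {set 'I_n} := [set ordS j | j in J].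

Definition initseg n (k : nat) : {set 'I_n} := [set i : 'I_n | (i < k)%N].

Definition xmon n (J : {set 'I_n}) : {mpoly int[n]} := \prod_(i in J) 'X_i.

(* Partitions of n: lambda_1 >= lambda_2 >= ... >= lambda_n >= 0 (padded with
   zeros; a partition of n has at most n parts, each <= n), summing to n. *)
Definition partition_of n (l : {ffun 'I_n -> 'I_n.+1}) : bool :=
  [forall i : 'I_n, forall j : 'I_n, (i <= j)%N ==> (l j <= l i)%N] &&
  (\sum_(i : 'I_n) (l i : nat) == n)%N.

Definition cells n (l : {ffun 'I_n -> 'I_n.+1}) :=
  {c : 'I_n * 'I_n | (c.2 < l c.1)%N}.

Definition crow n (l : {ffun 'I_n -> 'I_n.+1}) (a : cells l) : nat := (val a).1.
Definition ccol n (l : {ffun 'I_n -> 'I_n.+1}) (a : cells l) : nat := (val a).2.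

Definition isSYT n (l : {ffun 'I_n -> 'I_n.+1}) (T : {ffun cells l -> 'I_n}) : bool :=
  injectiveb T && [forall i : 'I_n, exists a : cells l, T a == i] &&
  [forall a : cells l, forall b : cells l,
     ((crow a == crow b) && (ccol a < ccol b)%N ==> (T a < T b)%N) &&
     ((ccol a == ccol b) && (crow a < crow b)%N ==> (T a < T b)%N)].

(* Des(T) = { i in [n-1] : i+1 lies in a strictly lower row than i }
   (English notation: lower row = larger row index) *)
Definition DesT n (l : {ffun 'I_n -> 'I_n.+1}) (T : {ffun cells l -> 'I_n}) : {set 'I_n} :=
  [set i : 'I_n | (i.+1 < n)%N &&
     [exists a : cells l, exists b : cells l,
        [&& T a == i, (T b : nat) == i.+1 & (crow a < crow b)%N]]].

Definition isSSYT n N (l : {ffun 'I_n -> 'I_n.+1}) (T : {ffun cells l -> 'I_N}) : bool :=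
  [forall a : cells l, forall b : cells l,
     ((crow a == crow b) && (ccol a < ccol b)%N ==> (T a <= T b)%N) &&
     ((ccol a == ccol b) && (crow a < crow b)%N ==> (T a < T b)%N)].

Definition schur n N (l : {ffun 'I_n -> 'I_n.+1}) : {mpoly int[N]} :=
  \sum_(T : {ffun cells l -> 'I_N} | isSSYT T) \prod_(a : cells l) 'X_(T a).

Definition fundF n N (D : {set 'I_n}) : {mpoly int[N]} :=
  \sum_(w : {ffun 'I_n -> 'I_N} |
          [forall j : 'I_n, (j.+1 < n)%N ==>
             ((w j <= w (ordS j))%N && ((j \in D) ==> (w j < w (ordS j))%N))])
     \prod_(j : 'I_n) 'X_(w j).

(* A quasisymmetric
   function is expressed via its restrictions to N variables, for all N. *)
Definition schur_positive n (A : {set 'S_n}) : Prop :=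
  exists c : {ffun 'I_n -> 'I_n.+1} -> nat,
    forall N : nat,
      let Q := \sum_(p in A) fundF N (Des p) in
      Q \is symmetric /\
      Q = \sum_(l | partition_of l) (c l)%:R * schur N l.

Definition cDes_invariant n (A : {set 'S_n}) : Prop :=
  exists psi : 'S_n -> 'S_n,
    [/\ forall p, p \in A -> psi p \in A,
        {in A &, injective psi},
        forall s, s \in A -> exists2 p, p \in A & psi p = s
      & forall p, p \in A -> cDes (psi p) = shift1 (cDes p)].

Definition hook n (k : nat) : {ffun 'I_n -> 'I_n.+1} :=
  [ffun i : 'I_n => inord (if val i == 0%N then (n - k)%N
                           else if (val i <= k)%N then 1%N else 0%N)].

From HB Require Import structures.
From mathcomp Require Import all_boot all_order all_algebra all_fingroup.
From mathcomp Require Import mpoly.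
From mathcomp Require Import zify.
Import GRing.Theory.

Set Implicit Arguments. Unset Strict Implicit. Unset Printing Implicit Defensive.

(* Compare the coefficients of x^[k] on both sides of the expansion: the left
   side counts the a in A with Des a = [k], the right side is the sum over l of
   m_l times the number of T in SYT(l) with Des T = [k].  In a standard Young
   tableau with descent set [k], induction on the entries forces 1, ..., k+1
   down the first column and k+2, ..., n along the first row: each entry is
   pinned down by its already placed upper and left neighbours and by whether
   its predecessor is a descent.  Hence l is the hook (n-k, 1^k) and the tableau
   is unique, so the right side is m_(n-k,1^k). *)

(* 0-based (row, column) of the entry j (the value j+1) in the standard tableau of
   hook shape with descent set [k]. *)
Definition hook_pos (k j : nat) : nat * nat :=
  if (j <= k)%N then (j, 0%N) else (0%N, (j - k)%N).

Lemma hook_posP k j x y : (x, y) = hook_pos k j <->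
  ((j <= k)%N /\ x = j /\ y = 0%N) \/ ((k < j)%N /\ x = 0%N /\ y = (j - k)%N).
Proof.
rewrite /hook_pos; case: leqP => jk; split=> [[-> ->]|]; try lia.
  by case=> [[_ [-> ->]]|] //; lia.
by case=> [|[_ [-> ->]]] //; lia.
Qed.

Lemma hook_pos_inj k : injective (hook_pos k).
Proof.
move=> i j; rewrite /hook_pos.
by case: (leqP i k); case: (leqP j k) => jk ik [] => *; lia.
Qed.

Lemma eq_ltn_ord n (a b : nat) : (a <= n)%N -> (b <= n)%N ->
  (forall c : 'I_n, (c < a)%N = (c < b)%N) -> a = b.
Proof.
move=> an bn ab; apply/eqP; rewrite eqn_leq; apply/andP; split; rewrite leqNgt; apply/negP.
  by move=> ba; have := ab (Ordinal (leq_trans ba an)); rewrite /= ltnn ba.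
by move=> ab'; have := ab (Ordinal (leq_trans ab' bn)); rewrite /= ltnn ab'.
Qed.

Lemma sum_ltn_ord m k : (\sum_(i < m) ((i < k)%N : nat))%N = minn m k.
Proof. by elim: m => [|m IHm]; rewrite ?big_ord0 ?min0n // big_ord_recr /= IHm; lia. Qed.

Section Tableaux.

Variables (n : nat) (l : {ffun 'I_n -> 'I_n.+1}).

Lemma eq_cell (a b : cells l) : crow a = crow b -> ccol a = ccol b -> a = b.
Proof.
case: a b => [[r c] Ha] [[r' c'] Hb]; rewrite /crow /ccol /= => e1 e2.
by apply: val_inj; rewrite /= (ord_inj e1) (ord_inj e2).
Qed.

Lemma cell_left (b : cells l) : (0 < ccol b)%N ->
  exists v : cells l, crow v = crow b /\ ccol v = (ccol b).-1.
Proof.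
case: b => [[r c] Hb]; rewrite /crow /ccol /= => c0.
have hc : (c.-1 < n)%N by rewrite (leq_ltn_trans (leq_pred c)).
have Hv : ((Ordinal hc : nat) < l r)%N by rewrite (leq_ltn_trans (leq_pred c)).
by exists (exist _ (r, Ordinal hc) Hv).
Qed.

Hypothesis l_part : partition_of l.

Lemma partition_nonincr (i j : 'I_n) : (i <= j)%N -> (l j <= l i)%N.
Proof. by case/andP: l_part => /forallP/(_ i)/forallP/(_ j)/implyP. Qed.

Lemma cell_above (b : cells l) : (0 < crow b)%N ->
  exists u : cells l, crow u = (crow b).-1 /\ ccol u = ccol b.
Proof.
case: b => [[r c] Hb]; rewrite /crow /ccol /= => r0.
have hr : (r.-1 < n)%N by rewrite (leq_ltn_trans (leq_pred r)).
have Hu : (c < l (Ordinal hr))%N.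
  by rewrite (leq_trans Hb) // partition_nonincr //= leq_pred.
by exists (exist _ (Ordinal hr, c) Hu).
Qed.

Variable T : {ffun cells l -> 'I_n}.
Hypothesis T_syt : isSYT T.

Lemma syt_inj : injective T.
Proof. by case/andP: T_syt => /andP[/injectiveP]. Qed.

Lemma syt_surj (i : 'I_n) : exists a, T a = i.
Proof.
case/andP: T_syt => /andP[_ /forallP/(_ i)/existsP[a /eqP Ta]] _.
by exists a.
Qed.

Lemma syt_row_lt a b : crow a = crow b -> (ccol a < ccol b)%N -> (T a < T b)%N.
Proof.
move=> e lt; case/andP: T_syt => _ /forallP/(_ a)/forallP/(_ b)/andP[+ _].
by move/implyP; apply; rewrite e eqxx lt.
Qed.

Lemma syt_col_lt a b : ccol a = ccol b -> (crow a < crow b)%N -> (T a < T b)%N.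
Proof.
move=> e lt; case/andP: T_syt => _ /forallP/(_ a)/forallP/(_ b)/andP[_].
by move/implyP; apply; rewrite e eqxx lt.
Qed.

Lemma mem_DesT a b : (T a).+1 = T b -> (T a \in DesT T) = (crow a < crow b)%N.
Proof.
move=> Tab; rewrite inE Tab ltn_ord /=; apply/existsP/idP.
  case=> a' /existsP[b' /and3P[/eqP Ta' /eqP Tb' lt]].
  have -> : a = a' by apply: syt_inj.
  suff -> : b = b' by [].
  by apply: syt_inj; apply: ord_inj; rewrite Tb'.
by move=> lt; exists a; apply/existsP; exists b; rewrite !eqxx lt.
Qed.

Variable k : nat.
Hypothesis T_des : DesT T = initseg n k.

Section InductionStep.

Variable b : cells l.
Hypothesis smaller_hook_pos :
  forall a, (T a < T b)%N -> (crow a, ccol a) = hook_pos k (T a).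

Lemma hook_pos_occupied i : (i < T b)%N -> (crow b, ccol b) <> hook_pos k i.
Proof.
move=> ib Eb.
have [a /(congr1 val)/= Ta] := syt_surj (Ordinal (ltn_trans ib (ltn_ord (T b)))).
have [ra ca] : crow a = crow b /\ ccol a = ccol b.
  by move: (smaller_hook_pos (a := a)); rewrite Ta -Eb => /(_ ib) [-> ->].
by move: ib; rewrite -(eq_cell ra ca) Ta ltnn.
Qed.

Lemma above_hook_pos : (0 < crow b)%N ->
  exists2 i, (i < T b)%N & ((crow b).-1, ccol b) = hook_pos k i.
Proof.
move=> r0; have [u [ru cu]] := cell_above r0.
have ub : (T u < T b)%N by apply: syt_col_lt; lia.
by exists (T u) => //; rewrite -ru -cu smaller_hook_pos.
Qed.

Lemma left_hook_pos : (0 < ccol b)%N ->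
  exists2 i, (i < T b)%N & (crow b, (ccol b).-1) = hook_pos k i.
Proof.
move=> c0; have [v [rv cv]] := cell_left c0.
have vb : (T v < T b)%N by apply: syt_row_lt; lia.
by exists (T v) => //; rewrite -rv -cv smaller_hook_pos.
Qed.

Lemma pred_hook_pos : (0 < T b)%N -> exists a : cells l,
  (crow a, ccol a) = hook_pos k (T b).-1 /\ ((T b).-1 < k)%N = (crow a < crow b)%N.
Proof.
move=> b0.
have [a Ta] := syt_surj (Ordinal (leq_ltn_trans (leq_pred (T b)) (ltn_ord (T b)))).
have Tab : (T a).+1 = T b by rewrite Ta /= prednK.
exists a; rewrite -(mem_DesT Tab) T_des inE Ta; split=> //.
by rewrite smaller_hook_pos Ta //= prednK.
Qed.

Lemma hook_pos_step : (crow b, ccol b) = hook_pos k (T b).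
Proof.
have taken i : (i < T b)%N -> ~ (((i <= k)%N /\ crow b = i /\ ccol b = 0%N) \/
                                ((k < i)%N /\ crow b = 0%N /\ ccol b = (i - k)%N)).
  by move=> ib /hook_posP; exact: hook_pos_occupied.
apply/hook_posP; case: (posnP (T b)) => [b0|b0].
  have r0 : crow b = 0%N.
    by case: (posnP (crow b)) => // /above_hook_pos [i]; rewrite b0.
  have c0 : ccol b = 0%N.
    by case: (posnP (ccol b)) => // /left_hook_pos [i]; rewrite b0.
  by left; rewrite b0.
have [a [/hook_posP Pa Da]] := pred_hook_pos b0.
case: (leqP (T b) k) => bk.
  (* T b - 1 is a descent, so T b sits strictly below it, under an entry of column 0. *)
  have ab : (crow a < crow b)%N by rewrite -Da; lia.
  have [i ib /hook_posP Pi] := above_hook_pos (leq_ltn_trans (leq0n _) ab).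
  by left; lia.
(* No descent at T b - 1, so T b is weakly above it.  Occupancy and the
   neighbours rule out column 0 and row 1, leaving (0, T b - k). *)
have ba : (crow b <= crow a)%N by rewrite leqNgt -Da; lia.
have N1 := taken (crow b); have N2 := taken (ccol b + k)%N.
have c0 : (0 < ccol b)%N by lia.
have [iv ivb /hook_posP Pv] := left_hook_pos c0.
case: (posnP (crow b)) => [r0|r0]; first by right; lia.
have [iu iub /hook_posP Pu] := above_hook_pos r0.
lia.
Qed.

End InductionStep.

Lemma syt_hook_pos a : (crow a, ccol a) = hook_pos k (T a).
Proof.
suff H j : forall a, (T a : nat) = j -> (crow a, ccol a) = hook_pos k (T a) by exact: H.
elim/ltn_ind: j => j IHj {}a Ta; apply: hook_pos_step => a' a'a.
by apply: (IHj (T a')); rewrite -?Ta.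
Qed.

End Tableaux.

Lemma syt_initseg_uniq n k (l : {ffun 'I_n -> 'I_n.+1}) (T1 T2 : {ffun cells l -> 'I_n}) :
  partition_of l -> isSYT T1 -> isSYT T2 ->
  DesT T1 = initseg n k -> DesT T2 = initseg n k -> T1 = T2.
Proof.
move=> l_part T1_syt T2_syt T1_des T2_des; apply/ffunP => a.
by apply/ord_inj/(@hook_pos_inj k); rewrite -!syt_hook_pos.
Qed.

Lemma hookP n k (r : 'I_n) :
  ((r : nat) = 0%N /\ (hook n k r : nat) = (n - k)%N) \/
  ((0 < r <= k)%N /\ (hook n k r : nat) = 1%N) \/
  ((k < r)%N /\ (hook n k r : nat) = 0%N).
Proof.
have := ltn_ord r; rewrite /hook ffunE /=.
case: eqP => [r0 | r0] rn; first by left; rewrite inordK //; lia.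
by right; case: (leqP r k) => rk; [left | right]; rewrite inordK //; lia.
Qed.

Lemma exists_cell_hook_pos n k i : (k < n)%N -> (i < n)%N ->
  exists a : cells (hook n k), (crow a, ccol a) = hook_pos k i.
Proof.
move=> kn i_n; case Ei: (hook_pos k i) => [r c]; move/esym/hook_posP: Ei => Pi.
have rn : (r < n)%N by lia.
have cn : (c < n)%N by lia.
have rc : ((Ordinal cn : nat) < hook n k (Ordinal rn))%N.
  by have := hookP k (Ordinal rn); rewrite /=; lia.
by exists (exist _ (Ordinal rn, Ordinal cn) rc).
Qed.

Lemma syt_shape_hook n k (l : {ffun 'I_n -> 'I_n.+1}) (T : {ffun cells l -> 'I_n}) :
  (k < n)%N -> partition_of l -> isSYT T -> DesT T = initseg n k -> l = hook n k.
Proof.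
move=> kn l_part T_syt T_des; have pos := syt_hook_pos l_part T_syt T_des.
apply/ffunP => r; apply/ord_inj/(@eq_ltn_ord n); try by rewrite -ltnS ltn_ord.
move=> c.
have hook_r := hookP k r; set h := nat_of_ord (hook n k r) in hook_r *.
apply/idP/idP => [lrc | hrc].
  pose a : cells l := exist _ (r, c) lrc.
  have /hook_posP := pos a; have := ltn_ord (T a).
  by rewrite -[crow a]/(r : nat) -[ccol a]/(c : nat); move: (T a : nat); lia.
have [j jn /hook_posP Pj] : exists2 j, (j < n)%N & ((r : nat), (c : nat)) = hook_pos k j.
  have := ltn_ord r; case: (posnP c) => c0 rn; [exists r | exists (c + k)%N];
    try lia; apply/hook_posP; lia.
have [[[r' c'] lrc'] /(congr1 val)/= Ta] := syt_surj T_syt (Ordinal jn).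
have /hook_posP := pos (exist _ (r', c') lrc'); rewrite Ta /crow /ccol /= => Pa.
have [-> ->] : r = r' /\ c = c' by split; apply: ord_inj; lia.
exact: lrc'.
Qed.

Lemma hook_pos_DesT n k (l : {ffun 'I_n -> 'I_n.+1}) (T : {ffun cells l -> 'I_n}) :
  (k < n)%N -> partition_of l -> isSYT T ->
  (forall a, (crow a, ccol a) = hook_pos k (T a)) -> DesT T = initseg n k.
Proof.
move=> kn l_part T_syt pos; apply/setP => i; rewrite [RHS]inE.
case: (ltnP i.+1 n) => [i1n | ni]; last first.
  by rewrite inE ltnNge ni /=; apply/esym/negbTE; rewrite -leqNgt; lia.
have [a Ta] := syt_surj T_syt i.
have [b /(congr1 val)/= Tb] := syt_surj T_syt (Ordinal i1n).
rewrite -Ta (mem_DesT T_syt (a := a) (b := b)); last by rewrite Tb Ta.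
by have /hook_posP := pos a; have /hook_posP := pos b; rewrite Tb Ta; lia.
Qed.

Lemma hook_partition n k : (k < n)%N -> partition_of (hook n k).
Proof.
move=> kn; apply/andP; split.
  apply/forallP => i; apply/forallP => j; apply/implyP => ij.
  move: (hookP k i) (hookP k j).
  by move: (hook n k i : nat) (hook n k j : nat) => hi hj; lia.
case: n kn => // n kn; rewrite big_ord_recl.
rewrite (eq_bigr (fun i : 'I_n => ((i < k)%N : nat))) => [|i _]; last first.
  move: (hookP k (lift ord0 i)); rewrite lift0.
  by move: (hook n.+1 k (lift ord0 i) : nat) => h; case: (ltnP i k) => /=; lia.
rewrite sum_ltn_ord; move: (hookP k (@ord0 n)).
by move: (hook n.+1 k ord0 : nat) => h0 /= P0; apply/eqP; lia.
Qed.

Lemma hook_cellP n k (a : cells (hook n k)) :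
  (crow a = 0%N /\ (ccol a < n - k)%N) \/ ((0 < crow a <= k)%N /\ ccol a = 0%N).
Proof.
case: a => [[r c] rc]; rewrite /crow /ccol /=.
by move: (hookP k r) rc; move: (hook n k r : nat) => h /=; lia.
Qed.

Definition hook_tableau n k : {ffun cells (hook n.+1 k) -> 'I_n.+1} :=
  [ffun a => inord (if ccol a == 0%N then crow a else (ccol a + k)%N)].

Section HookTableau.

Variables (n k : nat).
Hypothesis kn : (k < n.+1)%N.

Lemma hook_tableau_pos a : (crow a, ccol a) = hook_pos k (hook_tableau n k a).
Proof.
have := hook_cellP a; rewrite ffunE => cell_a; apply/hook_posP.
by case: eqP => c0; rewrite inordK; lia.
Qed.

Lemma hook_tableau_syt : isSYT (hook_tableau n k).
Proof.
apply/andP; split; [apply/andP; split|].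
- apply/injectiveP => a b Tab; move: (hook_tableau_pos a) (hook_tableau_pos b).
  by rewrite Tab => Ea; rewrite -Ea => -[rb cb]; apply: eq_cell.
- apply/forallP => i; have [a Pa] := exists_cell_hook_pos kn (ltn_ord i).
  apply/existsP; exists a; apply/eqP/ord_inj/(@hook_pos_inj k).
  by rewrite -hook_tableau_pos.
apply/forallP => a; apply/forallP => b.
have /hook_posP := hook_tableau_pos a; have /hook_posP := hook_tableau_pos b.
by move=> Pb Pa; apply/andP; split; apply/implyP => /andP[/eqP rab cab]; lia.
Qed.

Lemma hook_tableau_DesT : DesT (hook_tableau n k) = initseg n.+1 k.
Proof.
exact: hook_pos_DesT kn (hook_partition kn) hook_tableau_syt hook_tableau_pos.
Qed.

End HookTableau.

Lemma card_syt_initseg n k (l : {ffun 'I_n.+1 -> 'I_n.+2}) :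
  (k < n.+1)%N -> partition_of l ->
  #|[pred T : {ffun cells l -> 'I_n.+1} | isSYT T && (DesT T == initseg n.+1 k)]|
    = (l == hook n.+1 k).
Proof.
move=> kn l_part; case: (eqVneq l (hook n.+1 k)) => [l_hook | l_hook]; last first.
  apply: eq_card0 => T; apply/negP => /andP[T_syt /eqP T_des].
  by rewrite (syt_shape_hook kn l_part T_syt T_des) eqxx in l_hook.
subst l; apply: (@eq_card1 _ (hook_tableau n k)) => T; rewrite inE /=.
apply/andP/eqP => [[T_syt /eqP T_des] | ->].
  exact: syt_initseg_uniq l_part T_syt (hook_tableau_syt kn) T_des (hook_tableau_DesT kn).
by rewrite hook_tableau_syt // hook_tableau_DesT.
Qed.

Local Open Scope ring_scope.

Lemma sumr_indicator (R : pzSemiRingType) (I : finType) (P Q : pred I) :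
  \sum_(i | P i) (Q i)%:R = #|[pred i | P i && Q i]|%:R :> R.
Proof.
rewrite -sum1_card natr_sum big_mkcondr /=.
by apply: eq_bigr => i _; case: (Q i).
Qed.

Definition mnmset n (J : {set 'I_n}) : 'X_{1..n} := (\sum_(i in J) U_(i))%MM.

Lemma mnmsetE n (J : {set 'I_n}) i : mnmset J i = (i \in J).
Proof.
rewrite /mnmset mnm_sumE; case: (boolP (i \in J)) => iJ.
  rewrite (bigD1 i) //= mnm1E eqxx big1 // => j /andP[_ /negbTE ji].
  by rewrite mnm1E ji.
by rewrite big1 // => j jJ; rewrite mnm1E; case: eqP => // ij; rewrite -ij jJ in iJ.
Qed.

Lemma mnmset_inj n : injective (@mnmset n).
Proof.
move=> J K JK; apply/setP => i; have := congr1 (fun m : 'X_{1..n} => m i) JK.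
by rewrite /= !mnmsetE; case: (i \in J); case: (i \in K).
Qed.

Lemma mcoeff_xmon n (J K : {set 'I_n}) : (xmon J)@_(mnmset K) = (J == K)%:R :> int.
Proof.
rewrite /xmon mprodXE -/(mnmset J) mcoeffX.
by rewrite (inj_eq (@mnmset_inj n)).
Qed.

Unset Implicit Arguments. Set Strict Implicit.

Theorem lemma3p7 (n : nat) (A : {set 'S_n})
  (m : {ffun 'I_n -> 'I_n.+1} -> nat) :
  schur_positive A ->
  cDes_invariant A ->
  \sum_(p in A) xmon (Des p) =
    \sum_(l | partition_of l) (m l)%:R *
       \sum_(T : {ffun cells l -> 'I_n} | isSYT T) xmon (DesT T) ->
  forall k : nat, (k < n)%N ->
    m (hook n k) = #|[set a in A | Des a == initseg n k]|.
Proof.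
case: n A m => [|n] A m _ _ expansion k // kn.
have := congr1 (mcoeff (mnmset (initseg n.+1 k))) expansion.
rewrite !raddf_sum /=; under eq_bigr do rewrite mcoeff_xmon.
under [RHS]eq_bigr => l l_part.
  rewrite mulr_natl mcoeffMn raddf_sum /=.
  under eq_bigr do rewrite mcoeff_xmon.
  rewrite sumr_indicator card_syt_initseg //.
  over.
rewrite sumr_indicator (bigD1 (hook n.+1 k)) ?hook_partition //= eqxx mulr1n.
rewrite big1 ?addr0; last by move=> l /andP[_ /negbTE ->]; rewrite mul0rn.
move/eqP; rewrite Num.Theory.eqr_nat => /eqP <-.
by apply: eq_card => p; rewrite !inE.
Qed.
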